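(* Let $(G_i)_{i\in I}$ be a family of $g$-barrelled convergence groups. Then the product $\prod_{i\in I}G_i$, with the product convergence structure, is $g$-barrelled.
   Context: All groups are abelian. A convergence group is an abelian group with a convergence structure (an assignment to each point $x$ of a collection of filters converging to $x$). This assignment must satisfy three conditions: point ultrafilters converge to their point; finite intersections of filters converging to $x$ converge to $x$; and finer filters converge. The group operation must be compatible: $\mathcal F\to x$, $\mathcal G\to y$ imply $\mathcal F-\mathcal G\to x-y$. In the product convergence structure, a filter converges iff all its coordinate projections converge. $\mathbb T=\mathbb R/\mathbb Z$. $\Gamma G$ is the group of continuous homomorphisms $G\to\mathbb T$, and $\Gamma_s G$ is $\Gamma G$ with the topology of pointwise convergence. A set $M\subseteq\Gamma G$ is equicontinuous if for every filter $\mathcal F\to0$ in $G$, the filter generated by $\{\varphi(x):\varphi\in M, x\in F\}$, $F\in\mathcal F$, converges to $0$ in $\mathbb T$. A convergence group $G$ is $g$-barrelled if every compact subset of $\Gamma_s G$ is equicontinuous. *)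

From Stdlib Require Import Reals List.
Open Scope R_scope.

Definition is_filter {X : Type} (F : (X -> Prop) -> Prop) : Prop :=
  F (fun _ => True) /\
  (forall A B : X -> Prop, F A -> (forall x, A x -> B x) -> F B) /\
  (forall A B : X -> Prop, F A -> F B -> F (fun x => A x /\ B x)) /\
  ~ F (fun _ => False).

Definition pt_filter {X : Type} (x : X) : (X -> Prop) -> Prop := fun A => A x.
Definition filter_inter {X : Type} (F G : (X -> Prop) -> Prop) : (X -> Prop) -> Prop :=
  fun A => F A /\ G A.
Definition finer {X : Type} (G F : (X -> Prop) -> Prop) : Prop :=
  forall A, F A -> G A.
Definition image_filter {X Y : Type} (f : X -> Y) (F : (X -> Prop) -> Prop)
  : (Y -> Prop) -> Prop := fun B => F (fun x => B (f x)).

Record CGData : Type := {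
  carrier : Type;
  zero : carrier;
  add : carrier -> carrier -> carrier;
  opp : carrier -> carrier;
  conv : ((carrier -> Prop) -> Prop) -> carrier -> Prop
}.

Definition sub (G : CGData) (x y : carrier G) : carrier G := add G x (opp G y).

Definition filter_sub (G : CGData) (F H : (carrier G -> Prop) -> Prop)
  : (carrier G -> Prop) -> Prop :=
  fun C => exists A B, F A /\ H B /\
    (forall a b, A a -> B b -> C (sub G a b)).

Definition is_conv_group (G : CGData) : Prop :=
  (forall x y z, add G x (add G y z) = add G (add G x y) z) /\
  (forall x y, add G x y = add G y x) /\
  (forall x, add G (zero G) x = x) /\
  (forall x, add G x (opp G x) = zero G) /\
  (forall F x, conv G F x -> is_filter F) /\
  (forall x, conv G (pt_filter x) x) /\
  (forall F H x, conv G F x -> conv G H x -> conv G (filter_inter F H) x) /\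
  (forall F H x, conv G F x -> is_filter H -> finer H F -> conv G H x) /\
  (forall F H x y, conv G F x -> conv G H y -> conv G (filter_sub G F H) (sub G x y)).

(** * The circle group T = R/Z.  Elements of T are represented by real numbers;
    [distT a b] is the distance in T between the classes of a and b. *)
Definition distT (a b : R) : R :=
  let d := frac_part (a - b) in Rmin d (1 - d).

(** A map G -> T, represented by a function G -> R (values modulo Z). *)
Definition is_hom (G : CGData) (phi : carrier G -> R) : Prop :=
  forall x y, exists k : Z, phi (add G x y) = phi x + phi y + IZR k.

Definition continuous_T (G : CGData) (phi : carrier G -> R) : Prop :=
  forall F x, conv G F x ->
    forall eps, 0 < eps -> image_filter phi F (fun t => distT t (phi x) < eps).

Definition character (G : CGData) (phi : carrier G -> R) : Prop :=
  is_hom G phi /\ continuous_T G phi.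

Definition open_s (G : CGData) (U : (carrier G -> R) -> Prop) : Prop :=
  forall phi, character G phi -> U phi ->
    exists (xs : list (carrier G)) (eps : R), 0 < eps /\
      forall psi, character G psi ->
        (forall x, In x xs -> distT (psi x) (phi x) < eps) -> U psi.

Definition compact_s (G : CGData) (M : (carrier G -> R) -> Prop) : Prop :=
  (forall phi, M phi -> character G phi) /\
  forall (J : Type) (U : J -> (carrier G -> R) -> Prop),
    (forall j, open_s G (U j)) ->
    (forall phi, M phi -> exists j, U j phi) ->
    exists js : list J, forall phi, M phi -> exists j, In j js /\ U j phi.

(** equicontinuity: for F -> 0, the filter generated by the sets
    {phi(x) : phi in M, x in A}, A in F, converges to 0 in T *)
Definition equicontinuous (G : CGData) (M : (carrier G -> R) -> Prop) : Prop :=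
  forall F, conv G F (zero G) ->
    forall eps, 0 < eps ->
      exists A, F A /\ forall phi x, M phi -> A x -> distT (phi x) 0 < eps.

Definition g_barrelled (G : CGData) : Prop :=
  forall M, compact_s G M -> equicontinuous G M.

Definition prod_cg (I : Type) (G : I -> CGData) : CGData := {|
  carrier := forall i, carrier (G i);
  zero := fun i => zero (G i);
  add := fun x y i => add (G i) (x i) (y i);
  opp := fun x i => opp (G i) (x i);
  conv := fun F x => is_filter F /\
            forall i, conv (G i) (image_filter (fun y => y i) F) (x i)
|}.

From Stdlib Require Import Reals List ZArith Lra Lia.
From Stdlib Require Import Classical ClassicalEpsilon FunctionalExtensionality.
Open Scope R_scope.

(** The proof has three ingredients.
    - Every character [phi] of the product P has finite support: the points
      vanishing on a finite set L of coordinates form a subgroup that [phi]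
      maps into the arc of radius 1/4 (continuity at 0 along the filter of
      such subgroups), and T has no small subgroups.
    - A compact set M in [Gamma_s P] has a common finite support L.  If not,
      a diagonal construction produces points [point m] such that each
      character is trivial at some [point m], while characters of M stay
      1/8 away from Z at all earlier points; the open cover of M by the sets
      {psi | tnorm (psi (point m)) < 1/8} then has no finite subcover.
    - Restricting M to a factor [G j] gives a compact set of characters of
      [G j], which is equicontinuous; summing the (finitely many) coordinates
      in L yields equicontinuity of M. *)
Definition tnorm (t : R) : R := distT t 0.

Definition integral (t : R) : Prop := exists k : Z, t = IZR k.

Definition congZ (u v : R) : Prop := exists k : Z, u = v + IZR k.

Lemma distT_tnorm (a b : R) : distT a b = tnorm (a - b).
Proof. unfold tnorm, distT. now rewrite Rminus_0_r. Qed.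

Lemma tnorm_le_int (t : R) (k : Z) : tnorm t <= Rabs (t - IZR k).
Proof.
  unfold tnorm, distT, frac_part. rewrite Rminus_0_r.
  destruct (base_Int_part t) as [Hlo Hhi]. set (n := Int_part t) in *.
  destruct (Z_le_gt_dec k n) as [Hk | Hk].
  - apply IZR_le in Hk. apply Rle_trans with (t - IZR n); [apply Rmin_l |].
    rewrite Rabs_right; lra.
  - assert (Hk' : (n + 1 <= k)%Z) by lia. apply IZR_le in Hk'. rewrite plus_IZR in Hk'.
    apply Rle_trans with (1 - (t - IZR n)); [apply Rmin_r |].
    rewrite Rabs_left1; lra.
Qed.

Lemma tnorm_attained (t : R) : exists k : Z, tnorm t = Rabs (t - IZR k).
Proof.
  unfold tnorm, distT, frac_part. rewrite Rminus_0_r.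
  destruct (base_Int_part t) as [Hlo Hhi]. set (n := Int_part t) in *.
  unfold Rmin; destruct (Rle_dec _ _).
  - exists n. rewrite Rabs_right; lra.
  - exists (n + 1)%Z. rewrite plus_IZR, Rabs_left1; lra.
Qed.

Lemma tnorm_ge0 (t : R) : 0 <= tnorm t.
Proof. destruct (tnorm_attained t) as [k ->]. apply Rabs_pos. Qed.

Lemma tnorm_triangle (u v : R) : tnorm (u + v) <= tnorm u + tnorm v.
Proof.
  destruct (tnorm_attained u) as [a ->]; destruct (tnorm_attained v) as [b ->].
  apply Rle_trans with (Rabs (u + v - IZR (a + b))); [apply tnorm_le_int |].
  rewrite plus_IZR. replace (u + v - (IZR a + IZR b)) with ((u - IZR a) + (v - IZR b)) by ring.
  apply Rabs_triang.
Qed.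

Lemma tnorm_int (t : R) : integral t -> tnorm t = 0.
Proof.
  intros [k ->]. apply Rle_antisym; [| apply tnorm_ge0].
  apply Rle_trans with (Rabs (IZR k - IZR k)); [apply tnorm_le_int |].
  rewrite Rminus_diag, Rabs_R0. lra.
Qed.

Lemma tnorm_eq0_int (t : R) : tnorm t = 0 -> integral t.
Proof.
  intro H0. destruct (tnorm_attained t) as [k Hk]. exists k.
  rewrite H0 in Hk. destruct (Req_dec (t - IZR k) 0) as [Heq | Hne]; [lra |].
  exfalso. exact (Rabs_no_R0 _ Hne (eq_sym Hk)).
Qed.

Lemma tnorm_opp_le (u : R) : tnorm (- u) <= tnorm u.
Proof.
  destruct (tnorm_attained u) as [a ->].
  apply Rle_trans with (Rabs (- u - IZR (- a))); [apply tnorm_le_int |].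
  rewrite opp_IZR, <- Rabs_Ropp. right. f_equal. ring.
Qed.

Lemma tnorm_opp (u : R) : tnorm (- u) = tnorm u.
Proof.
  apply Rle_antisym; [apply tnorm_opp_le |].
  rewrite <- (Ropp_involutive u) at 1. apply tnorm_opp_le.
Qed.

Lemma tnorm_congZ (u v : R) : congZ u v -> tnorm u = tnorm v.
Proof.
  assert (Hle : forall u k, tnorm (u + IZR k) <= tnorm u).
  { intros w k. destruct (tnorm_attained w) as [a ->].
    apply Rle_trans with (Rabs (w + IZR k - IZR (a + k))); [apply tnorm_le_int |].
    rewrite plus_IZR. right. f_equal. ring. }
  intros [k ->]. apply Rle_antisym; [apply Hle |].
  replace v with (v + IZR k + IZR (- k)) at 1 by (rewrite opp_IZR; ring). apply Hle.
Qed.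

Lemma tnorm_small (s : R) : 0 <= s <= 1/2 -> tnorm s = s.
Proof.
  intro Hs. apply Rle_antisym.
  - apply Rle_trans with (Rabs (s - IZR 0)); [apply tnorm_le_int |].
    rewrite Rminus_0_r, Rabs_right; lra.
  - destruct (tnorm_attained s) as [k ->].
    destruct (Z_le_gt_dec k 0) as [Hk | Hk].
    + apply IZR_le in Hk. rewrite Rabs_right; lra.
    + assert (Hk' : (1 <= k)%Z) by lia. apply IZR_le in Hk'. rewrite Rabs_left1; lra.
Qed.

Lemma congZ_refl (u : R) : congZ u u.
Proof. exists 0%Z. simpl. lra. Qed.

Lemma congZ_trans (u v w : R) : congZ u v -> congZ v w -> congZ u w.
Proof. intros [a Ha] [b Hb]. exists (b + a)%Z. rewrite plus_IZR. lra. Qed.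

Lemma congZ_plus (u u' v v' : R) : congZ u u' -> congZ v v' -> congZ (u + v) (u' + v').
Proof. intros [a Ha] [b Hb]. exists (a + b)%Z. rewrite plus_IZR. lra. Qed.

Lemma congZ_int (u : R) : integral u -> congZ u 0.
Proof. intros [a Ha]. exists a. lra. Qed.

Lemma multiples_near_zero_int (t : R) :
  (forall n : nat, tnorm (INR n * t) < 1/4) -> integral t.
Proof.
  intro Hsmall. apply tnorm_eq0_int.
  destruct (tnorm_attained t) as [k Hk]. set (d := tnorm t) in *.
  assert (Hd0 : 0 <= d) by apply tnorm_ge0.
  assert (Hd1 : d < 1/4) by (specialize (Hsmall 1%nat); simpl in Hsmall; now rewrite Rmult_1_l in Hsmall).
  assert (Hmul : forall n, tnorm (INR n * t) = tnorm (INR n * d)).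
  { intro n. assert (Hnk : IZR (Z.of_nat n * k) = INR n * IZR k)
      by now rewrite mult_IZR, <- INR_IZR_INZ.
    unfold Rabs in Hk. destruct (Rcase_abs (t - IZR k)).
    - rewrite <- tnorm_opp. apply tnorm_congZ. exists (- (Z.of_nat n * k))%Z.
      rewrite opp_IZR, Hnk, Hk. ring.
    - apply tnorm_congZ. exists (Z.of_nat n * k)%Z. rewrite Hnk, Hk. ring. }
  (* the multiples [n d] never wrap around, hence stay below 1/4 *)
  assert (Hbelow : forall n, INR n * d < 1/4).
  { induction n as [| n IH]; [simpl; lra |].
    specialize (Hsmall (S n)). rewrite Hmul, S_INR in Hsmall. rewrite S_INR.
    rewrite tnorm_small in Hsmall; [exact Hsmall |].
    pose proof (pos_INR n). split; [apply Rmult_le_pos |]; lra. }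
  destruct (Rle_lt_or_eq_dec 0 d Hd0) as [Hpos | Hzero]; [| auto].
  exfalso. destruct (archimed (1 / d)) as [Hup _].
  assert (Hu : (0 < up (1 / d))%Z).
  { apply lt_IZR. apply Rlt_trans with (1 / d); [| lra].
    apply Rdiv_lt_0_compat; lra. }
  specialize (Hbelow (Z.to_nat (up (1 / d)))).
  rewrite INR_IZR_INZ, Z2Nat.id in Hbelow by lia.
  assert (IZR (up (1 / d)) * d > 1 / d * d) by (apply Rmult_gt_compat_r; lra).
  replace (1 / d * d) with 1 in * by (field; lra). lra.
Qed.

Lemma escape_from_zero (p t : R) :
  ~ integral t -> exists c : nat, tnorm (p + INR c * t) >= 1/8.
Proof.
  intro Ht. destruct (Rge_or_gt (tnorm p) (1/8)) as [Hp | Hp].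
  - exists 0%nat. simpl. now rewrite Rmult_0_l, Rplus_0_r.
  - assert (Hfar : exists n : nat, tnorm (INR n * t) >= 1/4).
    { apply NNPP. intro Hnone. apply Ht, multiples_near_zero_int.
      intro n. apply Rnot_ge_lt. intro Hn. apply Hnone. now exists n. }
    destruct Hfar as [n Hn]. exists n.
    pose proof (tnorm_triangle (p + INR n * t) (- p)) as Htri. rewrite tnorm_opp in Htri.
    replace (p + INR n * t + - p) with (INR n * t) in Htri by ring. lra.
Qed.

Lemma image_is_filter {X Y : Type} (f : X -> Y) (F : (X -> Prop) -> Prop) :
  is_filter F -> is_filter (image_filter f F).
Proof.
  intros [Htop [Hmono [Hinter Hproper]]]. unfold image_filter. repeat split.
  - apply Hmono with (fun _ => True); auto.
  - intros A B HA HAB. apply Hmono with (fun x => A (f x)); auto.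
  - intros A B HA HB. now apply Hinter.
  - intro Hempty. apply Hproper. apply Hmono with (fun _ => False); auto.
Qed.

Section ConvGroupAxioms.
Variable G : CGData.
Hypothesis HG : is_conv_group G.

Lemma cg_addA x y z : add G x (add G y z) = add G (add G x y) z.
Proof. apply HG. Qed.
Lemma cg_addC x y : add G x y = add G y x.
Proof. apply HG. Qed.
Lemma cg_add0l x : add G (zero G) x = x.
Proof. apply HG. Qed.
Lemma cg_add0r x : add G x (zero G) = x.
Proof. rewrite cg_addC. apply cg_add0l. Qed.
Lemma cg_addN x : add G x (opp G x) = zero G.
Proof. apply HG. Qed.
Lemma cg_conv_filter F x : conv G F x -> is_filter F.
Proof. apply HG. Qed.
Lemma cg_conv_pt x : conv G (pt_filter x) x.
Proof. apply HG. Qed.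
Lemma cg_conv_finer F H x : conv G F x -> is_filter H -> finer H F -> conv G H x.
Proof. apply HG. Qed.

Lemma cg_conv_pt_finer H x : is_filter H -> (forall B, B x -> H B) -> conv G H x.
Proof. intros HH Hx. exact (cg_conv_finer _ _ _ (cg_conv_pt x) HH Hx). Qed.

End ConvGroupAxioms.

Fixpoint nmul (G : CGData) (n : nat) (y : carrier G) : carrier G :=
  match n with O => zero G | S n => add G y (nmul G n y) end.

(** Homomorphisms into T, computed modulo Z. *)
Section Homomorphisms.
Variables (G : CGData) (phi : carrier G -> R).
Hypothesis Hhom : is_hom G phi.
Hypothesis Hzero : add G (zero G) (zero G) = zero G.

Lemma hom_add a b : congZ (phi (add G a b)) (phi a + phi b).
Proof. destruct (Hhom a b) as [k Hk]. now exists k. Qed.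

Lemma hom_zero : integral (phi (zero G)).
Proof.
  destruct (Hhom (zero G) (zero G)) as [k Hk]. rewrite Hzero in Hk.
  exists (- k)%Z. rewrite opp_IZR. lra.
Qed.

Lemma hom_nmul n y : congZ (phi (nmul G n y)) (INR n * phi y).
Proof.
  induction n as [| n [l Hl]].
  - destruct hom_zero as [k Hk]. exists k. simpl. lra.
  - simpl nmul. destruct (Hhom y (nmul G n y)) as [k Hk].
    exists (k + l)%Z. rewrite Hk, Hl, plus_IZR, S_INR. ring.
Qed.

End Homomorphisms.

Section Product.
Variables (I : Type) (G : I -> CGData).
Hypothesis HG : forall i, is_conv_group (G i).

Local Notation P := (prod_cg I G).

Lemma prod_add00 : add P (zero P) (zero P) = zero P.
Proof. apply functional_extensionality_dep; intro i. apply cg_add0l, HG. Qed.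

Definition vanishes_on (L : list I) (x : carrier P) : Prop :=
  forall j, In j L -> x j = zero (G j).

Definition supported_on (L : list I) (phi : carrier P -> R) : Prop :=
  forall x, vanishes_on L x -> integral (phi x).

Lemma supported_agree (L : list I) (phi : carrier P -> R) (a b : carrier P) :
  is_hom P phi -> supported_on L phi ->
  (forall i, In i L -> a i = b i) -> congZ (phi a) (phi b).
Proof.
  intros Hhom Hsupp Hab.
  set (d := (fun i => add (G i) (a i) (opp (G i) (b i))) : carrier P).
  assert (Hdecomp : a = add P b d).
  { apply functional_extensionality_dep; intro i. simpl. unfold d.
    rewrite (cg_addA _ (HG i)), (cg_addC _ (HG i) (b i) (a i)), <- (cg_addA _ (HG i)).
    now rewrite (cg_addN _ (HG i)), (cg_add0r _ (HG i)). }
  assert (Hd : integral (phi d)).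
  { apply Hsupp. intros j Hj. unfold d. rewrite (Hab j Hj). apply (cg_addN _ (HG j)). }
  rewrite Hdecomp. eapply congZ_trans; [apply hom_add, Hhom |].
  replace (phi b) with (phi b + 0) at 2 by ring.
  apply congZ_plus; [apply congZ_refl | now apply congZ_int].
Qed.

Definition cofinite_zero_filter (A : carrier P -> Prop) : Prop :=
  exists L, forall x, vanishes_on L x -> A x.

Lemma cofinite_zero_filter_conv : conv P cofinite_zero_filter (zero P).
Proof.
  assert (Hfilter : is_filter cofinite_zero_filter).
  { unfold cofinite_zero_filter. repeat split.
    - now exists nil.
    - intros A B [L HL] HAB. exists L. auto.
    - intros A B [L1 H1] [L2 H2]. exists (L1 ++ L2). intros x Hx.
      split; [apply H1 | apply H2]; intros j Hj; apply Hx, in_or_app; auto.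
    - intros [L HL]. apply (HL (zero P)). now intros j _. }
  split; [exact Hfilter |]. intro i.
  apply cg_conv_pt_finer; [apply HG | now apply image_is_filter |].
  intros B HB. exists (i :: nil). intros x Hx. rewrite (Hx i); [exact HB | now left].
Qed.

(** Every character of the product has a finite support: by continuity it
    maps a set of the form {x | x vanishes on L}, which is a subgroup, into the
    arc of radius 1/4, and T has no small subgroups. *)
Lemma character_finite_support (phi : carrier P -> R) :
  character P phi -> exists L, supported_on L phi.
Proof.
  intros [Hhom Hcont].
  destruct (Hcont _ _ cofinite_zero_filter_conv (1/4) ltac:(lra)) as [L HL].
  exists L. intros x Hx. apply multiples_near_zero_int. intro n.
  assert (Hmul : vanishes_on L (nmul P n x)).
  { intros j Hj. induction n as [| n IH]; [reflexivity |].
    simpl. rewrite IH, (Hx j Hj). apply cg_add0l, HG. }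
  specialize (HL _ Hmul). rewrite distT_tnorm in HL.
  destruct (hom_zero _ _ Hhom prod_add00) as [k0 Hk0]. rewrite Hk0 in HL.
  unfold Rminus in HL. rewrite <- opp_IZR in HL.
  rewrite (tnorm_congZ _ (phi (nmul P n x))) in HL by now exists (- k0)%Z.
  now rewrite <- (tnorm_congZ _ _ (hom_nmul _ phi Hhom prod_add00 n x)).
Qed.

Definition support (phi : carrier P -> R) : list I :=
  epsilon (inhabits nil) (fun L => supported_on L phi).

Lemma support_spec (phi : carrier P -> R) :
  character P phi -> supported_on (support phi) phi.
Proof. intro Hc. unfold support. apply epsilon_spec, character_finite_support, Hc. Qed.

Definition inj (j : I) (y : carrier (G j)) : carrier P :=
  fun i => match excluded_middle_informative (j = i) with
           | left e => eq_rect j (fun k => carrier (G k)) y i e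
           | right _ => zero (G i)
           end.

Lemma inj_at (j : I) (y : carrier (G j)) : inj j y j = y.
Proof.
  unfold inj. destruct (excluded_middle_informative (j = j)) as [e | Hne]; [| easy].
  now rewrite (proof_irrelevance _ e eq_refl).
Qed.

Lemma inj_ne (j i : I) (y : carrier (G j)) : j <> i -> inj j y i = zero (G i).
Proof.
  intro Hne. unfold inj. now destruct (excluded_middle_informative (j = i)).
Qed.

Lemma inj_add (j : I) (a b : carrier (G j)) : inj j (add (G j) a b) = add P (inj j a) (inj j b).
Proof.
  apply functional_extensionality_dep; intro i. simpl. unfold inj.
  destruct (excluded_middle_informative (j = i)) as [e | Hne].
  - now destruct e.
  - symmetry. apply cg_add0l, HG.
Qed.

Lemma inj_conv (j : I) (F : (carrier (G j) -> Prop) -> Prop) (y : carrier (G j)) :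
  conv (G j) F y -> conv P (image_filter (inj j) F) (inj j y).
Proof.
  intro HF. assert (HFf : is_filter F) by exact (cg_conv_filter _ (HG j) _ _ HF).
  split; [now apply image_is_filter |]. intro i.
  destruct (excluded_middle_informative (j = i)) as [e | Hne].
  - destruct e. rewrite inj_at.
    apply cg_conv_finer with F; [apply HG | exact HF | now do 2 apply image_is_filter |].
    intros B HB. unfold image_filter.
    replace (fun x => B (inj j x j)) with B; [exact HB |].
    apply functional_extensionality; intro x. now rewrite inj_at.
  - rewrite inj_ne by exact Hne.
    apply cg_conv_pt_finer; [apply HG | now do 2 apply image_is_filter |].
    intros B HB. unfold image_filter. destruct HFf as [Htop [Hmono _]].
    apply Hmono with (fun _ => True); [exact Htop |]. intros x _. now rewrite inj_ne.
Qed.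

Definition restrict_char (j : I) (phi : carrier P -> R) : carrier (G j) -> R :=
  fun y => phi (inj j y).

Lemma restrict_char_character (j : I) (phi : carrier P -> R) :
  character P phi -> character (G j) (restrict_char j phi).
Proof.
  intros [Hhom Hcont]. split.
  - intros a b. unfold restrict_char. rewrite inj_add. apply Hhom.
  - intros F y HF. exact (Hcont _ _ (inj_conv j F y HF)).
Qed.

Definition restrict_family (M : (carrier P -> R) -> Prop) (j : I) : (carrier (G j) -> R) -> Prop :=
  fun chi => exists phi, M phi /\ chi = restrict_char j phi.

(** Restriction is continuous for the pointwise topologies, so it preserves
    compactness: an open cover of the image pulls back to an open cover. *)
Lemma restrict_family_compact (M : (carrier P -> R) -> Prop) (j : I) :
  compact_s P M -> compact_s (G j) (restrict_family M j).
Proof.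
  intros [Hchar Hcover]. split.
  - intros chi [phi [Hphi ->]]. now apply restrict_char_character, Hchar.
  - intros J U HU HUcov.
    set (U' := fun k phi => character P phi /\ U k (restrict_char j phi)).
    assert (HU' : forall k, open_s P (U' k)).
    { intros k phi Hphi [_ Hk].
      destruct (HU k _ (restrict_char_character j phi Hphi) Hk) as [xs [eps [Heps Hxs]]].
      exists (map (inj j) xs), eps. split; [exact Heps |].
      intros psi Hpsi Hclose. split; [exact Hpsi |].
      apply Hxs; [now apply restrict_char_character |].
      intros x Hx. apply Hclose, in_map, Hx. }
    assert (HU'cov : forall phi, M phi -> exists k, U' k phi).
    { intros phi Hphi. destruct (HUcov (restrict_char j phi)) as [k Hk]; [now exists phi |].
      exists k. split; [now apply Hchar | exact Hk]. }
    destruct (Hcover J U' HU' HU'cov) as [js Hjs]. exists js.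
    intros chi [phi [Hphi ->]]. destruct (Hjs phi Hphi) as [k [Hk [_ HUk]]].
    now exists k.
Qed.

Definition restrict (L : list I) (x : carrier P) : carrier P :=
  fun i => if excluded_middle_informative (In i L) then x i else zero (G i).

Lemma restrict_in (L : list I) (x : carrier P) (i : I) : In i L -> restrict L x i = x i.
Proof. intro Hi. unfold restrict. now destruct (excluded_middle_informative (In i L)). Qed.

Lemma restrict_out (L : list I) (x : carrier P) (i : I) :
  ~ In i L -> restrict L x i = zero (G i).
Proof. intro Hi. unfold restrict. now destruct (excluded_middle_informative (In i L)). Qed.

Lemma restrict_cons (a : I) (L : list I) (x : carrier P) :
  ~ In a L -> restrict (a :: L) x = add P (inj a (x a)) (restrict L x).
Proof.
  intro Ha. apply functional_extensionality_dep; intro i. simpl.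
  destruct (excluded_middle_informative (a = i)) as [<- | Hne].
  - rewrite inj_at, restrict_in, restrict_out by (auto; now left).
    symmetry. apply cg_add0r, HG.
  - rewrite inj_ne, cg_add0l by (auto using HG).
    destruct (classic (In i L)) as [Hi | Hi].
    + rewrite !restrict_in by (auto; now right). reflexivity.
    + rewrite !restrict_out; [reflexivity | exact Hi |]. now intros [-> | ?].
Qed.

Lemma restrict_dup (a : I) (L : list I) (x : carrier P) :
  In a L -> restrict (a :: L) x = restrict L x.
Proof.
  intro Ha. apply functional_extensionality_dep; intro i.
  destruct (classic (In i L)) as [Hi | Hi].
  - rewrite !restrict_in by (auto; now right). reflexivity.
  - rewrite !restrict_out; [reflexivity | exact Hi |]. now intros [-> | ?].
Qed.

Lemma restrict_bound (phi : carrier P -> R) (x : carrier P) (d : R) (L : list I) :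
  is_hom P phi -> 0 <= d ->
  (forall j, In j L -> tnorm (phi (inj j (x j))) <= d) ->
  tnorm (phi (restrict L x)) <= INR (length L) * d.
Proof.
  intros Hhom Hd. induction L as [| a L IH]; intro Hcoord.
  - assert (Hnil : restrict nil x = zero P).
    { apply functional_extensionality_dep; intro i. now apply restrict_out. }
    rewrite Hnil, tnorm_int by exact (hom_zero _ _ Hhom prod_add00). simpl. lra.
  - specialize (IH (fun j Hj => Hcoord j (or_intror Hj))).
    simpl length. rewrite S_INR.
    destruct (classic (In a L)) as [Ha | Ha].
    + rewrite restrict_dup by exact Ha. lra.
    + rewrite restrict_cons, (tnorm_congZ _ _ (hom_add _ _ Hhom _ _)) by exact Ha.
      pose proof (tnorm_triangle (phi (inj a (x a))) (phi (restrict L x))).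
      pose proof (Hcoord a (or_introl eq_refl)). lra.
Qed.

Lemma open_small_at (x : carrier P) (r : R) :
  open_s P (fun psi => tnorm (psi x) < r).
Proof.
  intros phi _ Hphi. exists (x :: nil), (r - tnorm (phi x)). split; [lra |].
  intros psi _ Hclose. specialize (Hclose x (or_introl eq_refl)). rewrite distT_tnorm in Hclose.
  pose proof (tnorm_triangle (psi x - phi x) (phi x)) as Htri.
  replace (psi x - phi x + phi x) with (psi x) in Htri by ring. lra.
Qed.

(** Along an increasing
    sequence of finite sets of coordinates [stage n] we build points [point m]
    such that every character is trivial at some [point m], while the
    character [chr n] stays at distance 1/8 from Z at every [point m], m < n. *)
Section Diagonal.
Variables (pf : list I -> carrier P -> R) (px : list I -> carrier P).
Hypothesis pf_char : forall L, character P (pf L).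
Hypothesis px_vanishes : forall L, vanishes_on L (px L).
Hypothesis pf_px_nontrivial : forall L, ~ integral (pf L (px L)).

Fixpoint stage (n : nat) : list I :=
  match n with O => nil | S n => stage n ++ support (pf (stage n)) end.

Definition chr (n : nat) : carrier P -> R := pf (stage n).

(** The part of [px (stage n)] seen by [chr n]; it lives on [stage (S n)]
    and vanishes on [stage n]. *)
Definition bump (n : nat) : carrier P := restrict (support (chr n)) (px (stage n)).

Definition coef (p t : R) : nat :=
  epsilon (inhabits 0%nat) (fun c => tnorm (p + INR c * t) >= 1/8).

(** [partial m n] = sum over the stages m < k < n of suitable multiples of [bump k]. *)
Fixpoint partial (m n : nat) : carrier P :=
  match n with
  | O => zero P
  | S n => if Nat.leb n m then partial m n else
      add P (partial m n)
        (nmul P (coef (chr n (partial m n)) (chr n (bump n))) (bump n))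
  end.

(** A stage at which coordinate [i] appears, if any. *)
Definition first_stage (i : I) : nat :=
  epsilon (inhabits 0%nat) (fun K => In i (stage K)).

(** The limit of [partial m n] as n -> oo; it exists coordinatewise since
    each coordinate is eventually frozen. *)
Definition point (m : nat) : carrier P := fun i => partial m (first_stage i) i.

Lemma stage_mono (K K' : nat) (i : I) : (K <= K')%nat -> In i (stage K) -> In i (stage K').
Proof. intros Hle Hi. induction Hle; [exact Hi |]. simpl. apply in_or_app. now left. Qed.

Lemma nmul_zero_at (c : nat) (y : carrier P) (i : I) :
  y i = zero (G i) -> nmul P c y i = zero (G i).
Proof. intro Hy. induction c as [| c IH]; [reflexivity |]. simpl. rewrite IH, Hy. apply cg_add0l, HG. Qed.

Lemma bump_vanishes (n : nat) : vanishes_on (stage n) (bump n).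
Proof.
  intros j Hj. unfold bump, restrict. destruct (excluded_middle_informative _); [| reflexivity].
  now apply px_vanishes.
Qed.

Lemma bump_outside (n : nat) (i : I) : ~ In i (stage (S n)) -> bump n i = zero (G i).
Proof.
  intro Hi. apply restrict_out. intro Hsupp. apply Hi. simpl. apply in_or_app. now right.
Qed.

Lemma bump_nontrivial (n : nat) : ~ integral (chr n (bump n)).
Proof.
  intros [k Hk]. apply (pf_px_nontrivial (stage n)).
  destruct (supported_agree (support (chr n)) (chr n) (px (stage n)) (bump n))
    as [l Hl]; [apply pf_char | apply support_spec, pf_char | |].
  - intros i Hi. symmetry. now apply restrict_in.
  - exists (k + l)%Z. change (pf (stage n)) with (chr n). rewrite Hl, Hk, plus_IZR. ring.
Qed.

Lemma partial_outside (m K : nat) (i : I) : ~ In i (stage K) -> partial m K i = zero (G i).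
Proof.
  induction K as [| K IH]; intro Hi; [reflexivity |].
  assert (Hi' : ~ In i (stage K)) by (intro H; apply Hi, stage_mono with K; [lia | exact H]).
  simpl partial. destruct (Nat.leb K m); [now apply IH |].
  simpl. rewrite IH, nmul_zero_at by (auto using bump_outside). apply cg_add0l, HG.
Qed.

Lemma partial_frozen (m K K' : nat) (i : I) :
  In i (stage K) -> (K <= K')%nat -> partial m K' i = partial m K i.
Proof.
  intros Hi Hle. induction Hle as [| K' Hle IH]; [reflexivity |].
  simpl partial. destruct (Nat.leb K' m); [exact IH |].
  simpl. rewrite nmul_zero_at, cg_add0r by (auto using HG; apply bump_vanishes, stage_mono with K; auto).
  exact IH.
Qed.

Lemma partial_early (m K : nat) : (K <= S m)%nat -> partial m K = zero P.
Proof.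
  induction K as [| K IH]; intro Hle; [reflexivity |].
  simpl partial. replace (Nat.leb K m) with true by (symmetry; apply Nat.leb_le; lia).
  apply IH. lia.
Qed.

Lemma partial_step (m n : nat) : (m < n)%nat ->
  partial m (S n) =
  add P (partial m n) (nmul P (coef (chr n (partial m n)) (chr n (bump n))) (bump n)).
Proof. intro Hmn. simpl. now replace (Nat.leb n m) with false by (symmetry; apply Nat.leb_gt; lia). Qed.

Lemma point_agree (m K : nat) (i : I) : In i (stage K) -> point m i = partial m K i.
Proof.
  intro Hi. unfold point.
  assert (Hfirst : In i (stage (first_stage i))) by (unfold first_stage; apply epsilon_spec; now exists K).
  destruct (Nat.le_ge_cases (first_stage i) K) as [Hle | Hle].
  - symmetry. now apply partial_frozen with (1 := Hfirst).
  - now apply partial_frozen.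
Qed.

Lemma point_outside (m : nat) (i : I) : (forall K, ~ In i (stage K)) -> point m i = zero (G i).
Proof. intro Hi. apply partial_outside, Hi. Qed.

Lemma point_escape (m n : nat) : (m < n)%nat -> tnorm (chr n (point m)) >= 1/8.
Proof.
  intro Hmn.
  assert (Hchar : character P (chr n)) by apply pf_char.
  assert (Hsee : congZ (chr n (point m)) (chr n (partial m (S n)))).
  { apply (supported_agree (support (chr n))); [apply Hchar | now apply support_spec |].
    intros i Hi. apply point_agree. simpl. apply in_or_app. now right. }
  rewrite (tnorm_congZ _ _ Hsee), partial_step by exact Hmn.
  set (p := chr n (partial m n)). set (t := chr n (bump n)).
  assert (Hcoef : tnorm (p + INR (coef p t) * t) >= 1/8).
  { unfold coef. apply (epsilon_spec _ (fun c => tnorm (p + INR c * t) >= 1/8)).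
    apply escape_from_zero, bump_nontrivial. }
  rewrite (tnorm_congZ _ (p + INR (coef p t) * t)); [exact Hcoef |].
  eapply congZ_trans; [apply hom_add, Hchar |].
  apply congZ_plus; [apply congZ_refl | apply hom_nmul; [apply Hchar | apply prod_add00]].
Qed.

Lemma common_stage (L : list I) :
  exists m, forall i, In i L -> (exists K, In i (stage K)) -> In i (stage m).
Proof.
  induction L as [| a L [m Hm]]; [now exists 0%nat |].
  destruct (classic (exists K, In a (stage K))) as [[K HK] | HK].
  - exists (Nat.max K m). intros i [<- | Hi] Hex.
    + apply stage_mono with K; [lia | exact HK].
    + apply stage_mono with m; [lia | now apply Hm].
  - exists m. intros i [<- | Hi] Hex; [contradiction | now apply Hm].
Qed.

Lemma point_trivial (psi : carrier P -> R) :
  character P psi -> exists m, integral (psi (point m)).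
Proof.
  intro Hpsi. destruct (common_stage (support psi)) as [m Hm]. exists m.
  apply support_spec; [exact Hpsi |]. intros j Hj.
  destruct (classic (exists K, In j (stage K))) as [Hex | Hnever].
  - rewrite (point_agree m m j (Hm j Hj Hex)), partial_early by lia. reflexivity.
  - apply point_outside. intros K HK. apply Hnever. now exists K.
Qed.

End Diagonal.

(** Otherwise the diagonal construction yields an open cover
    {psi | tnorm (psi (point m)) < 1/8} of M without finite subcover. *)
Lemma compact_common_support (M : (carrier P -> R) -> Prop) :
  compact_s P M -> exists L, forall phi, M phi -> supported_on L phi.
Proof.
  intros [Hchar Hcover]. apply NNPP; intro Hnone.
  assert (Hwitness : forall L, exists w : (carrier P -> R) * carrier P,
    M (fst w) /\ vanishes_on L (snd w) /\ ~ integral (fst w (snd w))).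
  { intro L. apply NNPP. intro Hno. apply Hnone. exists L. intros phi Hphi x Hx.
    apply NNPP. intro Hnt. apply Hno. now exists (phi, x). }
  destruct (ClassicalEpsilon.choice _ Hwitness) as [w Hw].
  set (pf := fun L => fst (w L)). set (px := fun L => snd (w L)).
  assert (pf_char : forall L, character P (pf L)) by (intro L; apply Hchar, Hw).
  assert (px_van : forall L, vanishes_on L (px L)) by (intro L; apply Hw).
  assert (pf_nt : forall L, ~ integral (pf L (px L))) by (intro L; apply Hw).
  set (V := fun m (psi : carrier P -> R) => tnorm (psi (point pf px m)) < 1/8).
  destruct (Hcover nat V) as [js Hjs].
  - intro m. apply open_small_at.
  - intros psi Hpsi. destruct (point_trivial pf px px_van psi (Hchar _ Hpsi)) as [m Hm].
    exists m. unfold V. rewrite tnorm_int by exact Hm. lra.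
  - set (n := S (list_max js)).
    destruct (Hjs (chr pf n)) as [m [Hmjs Hm]]; [apply Hw |].
    assert (Hmn : (m < n)%nat).
    { apply le_n_S. assert (Hbound : Forall (fun k => (k <= list_max js)%nat) js)
        by now apply list_max_le.
      exact (proj1 (Forall_forall _ js) Hbound m Hmjs). }
    pose proof (point_escape pf px pf_char px_van pf_nt m n Hmn). unfold V in Hm. lra.
Qed.

Lemma finite_coordinates_small (M : (carrier P -> R) -> Prop) (L : list I)
  (F : (carrier P -> Prop) -> Prop) (d : R) :
  (forall i, g_barrelled (G i)) -> compact_s P M -> conv P F (zero P) -> 0 < d ->
  exists A, F A /\ forall x, A x -> forall j, In j L ->
    forall phi, M phi -> tnorm (phi (inj j (x j))) < d.
Proof.
  intros Hbar HM [HFfilter HFcoord] Hd.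
  induction L as [| a L [A [HA Hsmall]]].
  - exists (fun _ => True). split; [apply HFfilter |]. now intros x _ j [].
  - destruct (Hbar a (restrict_family M a) (restrict_family_compact M a HM) _ (HFcoord a) d Hd)
      as [Aa [HAa Hsmall_a]].
    exists (fun x => Aa (x a) /\ A x). split; [now apply HFfilter |].
    intros x [Hxa Hx] j [<- | Hj] phi Hphi.
    + apply (Hsmall_a (restrict_char a phi)); [now exists phi | exact Hxa].
    + now apply Hsmall.
Qed.

End Product.

Theorem proposition2p9 (I : Type) (G : I -> CGData) :
  (forall i, is_conv_group (G i)) ->
  (forall i, g_barrelled (G i)) ->
  g_barrelled (prod_cg I G).
Proof.
  intros HG Hbar M HM F HF eps Heps.
  destruct (compact_common_support I G HG M HM) as [L HL].
  set (n := INR (length L)). assert (Hn : 0 <= n) by apply pos_INR.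
  set (d := eps / (n + 1)). assert (Hd : 0 < d) by (apply Rdiv_lt_0_compat; lra).
  destruct (finite_coordinates_small I G HG M L F d Hbar HM HF Hd) as [A [HA Hsmall]].
  exists A. split; [exact HA |]. intros phi x Hphi Hx. change (tnorm (phi x) < eps).
  assert (Hchar : character _ phi) by now apply HM.
  (* phi only sees the coordinates in L, each contributing less than d *)
  assert (Hrestr : congZ (phi x) (phi (restrict I G L x))).
  { apply (supported_agree I G HG L); [apply Hchar | now apply HL |].
    intros i Hi. symmetry. now apply restrict_in. }
  rewrite (tnorm_congZ _ _ Hrestr).
  assert (Hbound := restrict_bound I G HG phi x d L (proj1 Hchar) (Rlt_le _ _ Hd)
    (fun j Hj => Rlt_le _ _ (Hsmall x Hx j Hj phi Hphi))).
  assert (n * d < eps) by (unfold d; apply Rmult_lt_reg_r with (n + 1); [lra |];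
                           field_simplify; lra).
  fold n in Hbound. lra.
Qed.
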